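(* Consider a one-site PTM cascade with $n\ge1$ layers, with all rate constants and the total amounts $\overline{F}_i,\overline{S}_i$ ($i=1,\dots,n$) positive and fixed. Let $r(s)=f_0(s)+f_1^Y(s)$, written in reduced form $r=r_1/r_2$ with $r_1,r_2\in\mathbb{R}[s]$ (these depend only on the rate constants and on $\overline{F}_i,\overline{S}_i$, not on $\overline{E}$). Let $\sigma_n=\beta_0$ be the smallest positive real zero of $r_2$. Then $r$ is continuous and strictly increasing on $[0,\sigma_n)$, with $r(0)=0$ and $r(s)\to+\infty$ as $s\to\sigma_n^-$, and for every $\overline{E}>0$ the BMSS value of $S_n^1$ is the unique $s\in[0,\sigma_n)$ with $r(s)=\overline{E}$. Thus the stimulus-response map $\overline{E}\mapsto S_n^1$ is the inverse of $r|_{[0,\sigma_n)}$.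
   Context: A one-site PTM cascade with $n$ layers has species $E=S_0^1$ and, for $i=1,\dots,n$, $S_i^0,S_i^1,F_i,Y_i^0,Y_i^1$, with reactions $S_{i-1}^1+S_i^0 \rightleftharpoons Y_i^0 \to S_{i-1}^1+S_i^1$ (rate constants $a_i^0,b_i^0,c_i^0$) and $F_i+S_i^1\rightleftharpoons Y_i^1\to F_i+S_i^0$ (rate constants $a_i^1,b_i^1,c_i^1$), all positive, mass-action kinetics. Put $\delta_i=a_i^1/(b_i^1+c_i^1)$, $\gamma_i=(c_i^1/c_i^0)\delta_i$, $\lambda_i=\frac{b_i^0+c_i^0}{a_i^0}\gamma_i$. Given total amounts $\overline{E},\overline{F}_i,\overline{S}_i$, a steady state is a real solution of: $Y_i^0=\gamma_iF_iS_i^1$, $Y_i^1=\delta_iF_iS_i^1$, $\lambda_iF_iS_i^1=S_i^0S_{i-1}^1$, $\overline{F}_i=F_i+Y_i^1$, $\overline{S}_i=S_i^0+S_i^1+Y_i^0+Y_i^1+Y_{i+1}^0$ ($i=1,\dots,n$, $Y_{n+1}^0:=0$), $\overline{E}=E+Y_1^0$. A BMSS is a steady state with positive total amounts and all concentrations nonnegative. Define $d_i(x,y)=(\overline{S}_i-y)-x-\overline{F}_i(\delta_i+\gamma_i)x+\delta_i(\overline{S}_i-y)x-\delta_ix^2$ and $g_i^Y(x)=\frac{\gamma_i\overline{F}_ix}{1+\delta_ix}$; define rational functions of $s$ recursively by $f_n(s)=s$, $f_{n+1}^Y(s)=0$, and for $i=n,\dots,1$: $f_i^Y(s)=g_i^Y(f_i(s))$,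 $f_{i-1}(s)=\frac{\lambda_i\overline{F}_if_i(s)}{d_i(f_i(s),f_{i+1}^Y(s))}$. $\beta_0$ denotes the smallest positive singularity of $f_0$. *)

From Stdlib Require Import Reals List.
Open Scope R_scope.

Fixpoint Peval (p : list R) (x : R) : R :=
  match p with
  | nil => 0
  | c :: q => c + x * Peval q x
  end.

(* r1, r2 coprime in R[s]: Bezout identity (polynomial identities over R are
   equivalent to identities of the polynomial functions). *)
Definition Pcoprime (r1 r2 : list R) : Prop :=
  exists u v : list R, forall x, Peval u x * Peval r1 x + Peval v x * Peval r2 x = 1.

(* f is the rational function r1/r2 written in reduced form:
   r2 is not the zero polynomial, r1 r2 coprime, and f agrees with r1/r2
   outside a finite set of points (where pointwise evaluation may hit a
   vanishing intermediate denominator or a pole). *)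
Definition reduced_form (f : R -> R) (r1 r2 : list R) : Prop :=
  (exists x, Peval r2 x <> 0) /\ Pcoprime r1 r2 /\
  exists L : list R, forall s, ~ In s L -> f s = Peval r1 s / Peval r2 s.

Section Cascade.
Variables (a0 b0 c0 a1 b1 c1 Fbar Sbar : nat -> R).

Definition delta (i : nat) : R := a1 i / (b1 i + c1 i).
Definition gamma (i : nat) : R := (c1 i / c0 i) * delta i.
Definition lambda (i : nat) : R := (b0 i + c0 i) / a0 i * gamma i.

Definition dfun (i : nat) (x y : R) : R :=
  (Sbar i - y) - x - Fbar i * (delta i + gamma i) * x
  + delta i * (Sbar i - y) * x - delta i * x ^ 2.

Definition gY (i : nat) (x : R) : R := gamma i * Fbar i * x / (1 + delta i * x).

(* casc n s k = (f_{n-k}(s), f^Y_{n-k+1}(s)), for k <= n. *)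
Fixpoint casc (n : nat) (s : R) (k : nat) : R * R :=
  match k with
  | O => (s, 0)
  | S k' =>
      let (x, y) := casc n s k' in
      let i := (n - k')%nat in
      (lambda i * Fbar i * x / dfun i x y, gY i x)
  end.

Definition rfun (n : nat) (s : R) : R := fst (casc n s n) + snd (casc n s n).

(* Biologically meaningful steady state.  Species: E = S1 0, and for
   i = 1..n: S0 i, S1 i, F i, Y0 i, Y1 i (S_i^0, S_i^1, F_i, Y_i^0, Y_i^1). *)
Definition BMSS (n : nat) (Ebar : R) (S0 S1 F Y0 Y1 : nat -> R) : Prop :=
  0 <= S1 O /\
  (forall i, (1 <= i <= n)%nat ->
     0 <= S0 i /\ 0 <= S1 i /\ 0 <= F i /\ 0 <= Y0 i /\ 0 <= Y1 i) /\
  (forall i, (1 <= i <= n)%nat ->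
     Y0 i = gamma i * F i * S1 i /\
     Y1 i = delta i * F i * S1 i /\
     lambda i * F i * S1 i = S0 i * S1 (i - 1)%nat /\
     Fbar i = F i + Y1 i /\
     Sbar i = S0 i + S1 i + Y0 i + Y1 i + (if Nat.eqb i n then 0 else Y0 (S i))) /\
  Ebar = S1 O + Y0 1%nat.

End Cascade.

From Stdlib Require Import Reals Lra Lia List Classical.
Open Scope R_scope.

(* Solving the steady-state equations from the last layer backwards, [S_n^1 = s] forces
   [S_{i-1}^1 = f_{i-1}(s)] and [Y_i^0 = f_i^Y(s)], and a steady state with [S_n^1 = s] is
   biologically meaningful exactly when all denominators [d_i] stay positive along the way;
   then [Ebar = f_0(s) + f_1^Y(s) = r(s)].
   By induction on the layers, each [f_i] is continuous and increasing from [f_i(0) = 0] on an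
   interval [0, beta) and unbounded there, and [f^Y] is nondecreasing. The next denominator
   equals [Sbar_i > 0] at 0, has [d/f] decreasing while [d >= 0], and becomes negative once
   [f] exceeds [Sbar_i + 1]; so it has a first positive zero, where [f_{i-1} = λ Fbar f_i / d]
   blows up. Hence [r] maps [[0, sigma)] increasingly and continuously onto [[0, oo)].
   Finally [r1/r2] agrees with [r] off finitely many points, so by continuity and
   coprimality [r2] has no zero on [[0, sigma)], and it vanishes at the pole [sigma]. *)

(** * Elementary real analysis *)

Lemma limit1_in_ext (f g : R -> R) (D : R -> Prop) l x0 :
  (forall x, D x -> f x = g x) -> limit1_in f D l x0 -> limit1_in g D l x0.
Proof.
  intros Hfg Hf eps Heps. destruct (Hf eps Heps) as [a [Ha Hx]].
  exists a; split; auto. intros x [Dx Hd]. rewrite <- (Hfg x Dx). apply Hx; auto.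
Qed.

Lemma limit1_in_restrict (f : R -> R) (D D' : R -> Prop) l x0 :
  (forall x, D' x -> D x) -> limit1_in f D l x0 -> limit1_in f D' l x0.
Proof.
  intros HD Hf eps Heps. destruct (Hf eps Heps) as [a [Ha Hx]].
  exists a; split; auto. intros x [Dx Hd]. apply Hx; auto.
Qed.

Lemma limit1_in_ball (f : R -> R) D l x0 : limit1_in f D l x0 ->
  forall eps, 0 < eps -> exists a, 0 < a /\
    forall x, D x -> Rabs (x - x0) < a -> Rabs (f x - l) < eps.
Proof.
  intros Hf eps Heps. destruct (Hf eps Heps) as [a [Ha Hx]].
  exists a; split; auto. intros x Dx Hd. apply (Hx x). split; auto.
Qed.

Lemma continuity_pt_limit1_in (g : R -> R) D t :
  continuity_pt g t -> limit1_in g D (g t) t.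
Proof.
  intros Hg eps Heps. destruct (Hg eps Heps) as [a [Ha Hx]].
  exists a; split; auto. intros x [_ Hd].
  destruct (Req_dec t x) as [<-|Hne].
  - simpl; unfold R_dist. rewrite Rminus_diag, Rabs_R0. lra.
  - apply Hx. repeat split; auto.
Qed.

Lemma limit1_in_scaled_div (f g : R -> R) D c s :
  limit1_in f D (f s) s -> limit1_in g D (g s) s -> g s <> 0 ->
  limit1_in (fun t => c * f t / g t) D (c * f s / g s) s.
Proof.
  intros Hf Hg Hgs. unfold Rdiv.
  apply limit_mul; [apply limit_mul; [apply (limit_free (fun _ => c) D 0 s)|]|]; auto.
  apply limit_inv; auto.
Qed.

Lemma limit1_in_zero_dense (g : R -> R) D t :
  limit1_in g D (g t) t ->
  (forall a, 0 < a -> exists x, D x /\ Rabs (x - t) < a /\ g x = 0) -> g t = 0.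
Proof.
  intros Hg Hz. destruct (Req_dec (g t) 0) as [|Hne]; auto.
  destruct (limit1_in_ball _ _ _ _ Hg (Rabs (g t))) as [a [Ha near]].
  { apply Rabs_pos_lt; auto. }
  destruct (Hz a Ha) as [x [Dx [Hxa Hgx]]].
  specialize (near x Dx Hxa). rewrite Hgx, Rminus_0_l, Rabs_Ropp in near. lra.
Qed.

Lemma exists_not_In_between (L : list R) a b :
  a < b -> exists x, a < x < b /\ ~ In x L.
Proof.
  revert a b; induction L as [|l L IH]; intros a b Hab.
  - exists ((a + b) / 2); split; [lra|auto].
  - destruct (Rlt_dec a l) as [Hal|Hal]; [destruct (Rlt_dec l b) as [Hlb|Hlb]|].
    + destruct (IH a l Hal) as [x [Hx Hn]].
      exists x; split; [lra|]. intros [E|E]; [lra|auto].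
    + destruct (IH a b Hab) as [x [Hx Hn]].
      exists x; split; [lra|]. intros [E|E]; [lra|auto].
    + destruct (IH a b Hab) as [x [Hx Hn]].
      exists x; split; [lra|]. intros [E|E]; [lra|auto].
Qed.

Lemma Peval_continuity_pt (p : list R) x : continuity_pt (Peval p) x.
Proof.
  induction p as [|c q IH]; simpl.
  - apply continuity_pt_const. intros u v; reflexivity.
  - apply (continuity_pt_plus (fun _ => c) (fun x => x * Peval q x)).
    + apply continuity_pt_const. intros u v; reflexivity.
    + apply (continuity_pt_mult (fun x => x) (Peval q)); auto.
      apply derivable_continuous_pt, derivable_pt_id.
Qed.

Lemma Rdiv_scaled_lt c a b x y :
  0 < c -> 0 < a -> 0 < b -> x * b < y * a -> c * x / a < c * y / b.
Proof.
  intros Hc Ha Hb H. apply Rmult_lt_reg_r with (a * b); [nra|].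
  replace (c * x / a * (a * b)) with (c * (x * b)) by (field; lra).
  replace (c * y / b * (a * b)) with (c * (y * a)) by (field; lra).
  nra.
Qed.

Lemma incr_unbounded_blowup (f : R -> R) sigma :
  (forall s t, 0 <= s -> s < t -> t < sigma -> f s < f t) ->
  (forall M, exists s, 0 <= s < sigma /\ M < f s) ->
  forall M, exists eta, 0 < eta /\ forall s, sigma - eta < s < sigma -> M < f s.
Proof.
  intros Hincr Hunb M. destruct (Hunb M) as [s0 [Hs0 HM]].
  exists (sigma - s0); split; [lra|]. intros s Hs.
  assert (f s0 < f s) by (apply Hincr; lra). lra.
Qed.

Lemma inv_unbounded_near_zero (D : R -> Prop) (d : R -> R) a beta :
  a < beta -> D beta -> limit1_in d D (d beta) beta -> d beta = 0 ->
  (forall s, a <= s < beta -> D s /\ 0 < d s) ->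
  forall M, exists s, a <= s < beta /\ M < / d s.
Proof.
  intros Hab Db Hd Hd0 Hpos M.
  assert (HM : 0 < Rabs M + 1) by (pose proof (Rabs_pos M); lra).
  destruct (limit1_in_ball _ _ _ _ Hd (/ (Rabs M + 1))) as [e [He near]].
  { apply Rinv_0_lt_compat; auto. }
  set (s := Rmax a (beta - e / 2)).
  assert (Hs : a <= s < beta) by (split; [apply Rmax_l|apply Rmax_lub_lt; lra]).
  exists s; split; auto. destruct (Hpos s Hs) as [Ds ds].
  assert (small : d s < / (Rabs M + 1)).
  { assert (beta - e / 2 <= s) by apply Rmax_r.
    specialize (near s Ds ltac:(rewrite Rabs_left; lra)).
    rewrite Hd0, Rminus_0_r, Rabs_right in near; lra. }
  apply Rinv_lt_contravar in small; [|apply Rmult_lt_0_compat; auto; apply Rinv_0_lt_compat; auto].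
  rewrite Rinv_inv in small. pose proof (Rle_abs M). lra.
Qed.

Section FirstZero.

Variables (D : R -> Prop) (d : R -> R).
Hypotheses (D_nonneg : forall s, D s -> 0 <= s)
  (D_down : forall s t, D t -> 0 <= s <= t -> D s)
  (D_open : forall s, D s -> exists t, s < t /\ D t)
  (D_0 : D 0) (d_0 : 0 < d 0)
  (d_cont : forall s, D s -> limit1_in d D (d s) s)
  (d_pos_down : forall s t, D t -> 0 <= s < t -> 0 <= d t -> 0 < d s)
  (d_neg : exists t, D t /\ d t < 0).

Let E s := D s /\ 0 < d s.

Lemma positivity_set_down s t : E t -> 0 <= s <= t -> E s.
Proof.
  intros [Dt dt] [Hs Hst]. destruct (Rle_lt_or_eq_dec s t Hst) as [Hlt| ->].
  - split; [apply (D_down s t)|apply (d_pos_down s t)]; auto; lra.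
  - split; auto.
Qed.

Lemma positivity_set_sup :
  exists beta, 0 <= beta /\ D beta /\ (forall s, E s -> s <= beta) /\
    forall s, s < beta -> exists e, E e /\ s < e.
Proof.
  destruct d_neg as [t0 [Dt0 dt0]].
  assert (below : forall s, E s -> s < t0).
  { intros s Es. apply Rnot_le_lt; intros Hs.
    destruct (positivity_set_down t0 s Es) as [_ Ht0]; [split; auto|lra]. }
  destruct (completeness E) as [beta [ub lub]].
  { exists t0; intros s Es; left; auto. }
  { exists 0; split; auto. }
  exists beta; split; [apply ub; split; auto|]. split.
  { apply (D_down beta t0); auto. split; [apply ub; split; auto|].
    apply lub. intros s Es; left; auto. }
  split; [exact ub|]. intros s Hs. apply NNPP; intros Hno.
  apply (Rlt_not_le _ _ Hs), lub. intros e Ee.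
  apply Rnot_lt_le; intros He; apply Hno; eauto.
Qed.

(* At the supremum of the positivity set, a negative value of [d] would contradict the
   approximation from below and a positive one the openness of [D]. *)
Lemma first_zero :
  exists beta, 0 < beta /\ D beta /\ d beta = 0 /\
    forall s, D s /\ 0 < d s <-> 0 <= s < beta.
Proof.
  destruct positivity_set_sup as [beta [Hbeta [Db [ub approx]]]].
  assert (d_beta : d beta = 0).
  { destruct (Req_dec (d beta) 0) as [|Hne]; auto. exfalso.
    destruct (limit1_in_ball _ _ _ _ (d_cont beta Db) (Rabs (d beta))) as [a [Ha near]].
    { apply Rabs_pos_lt; auto. }
    destruct (Rle_lt_dec (d beta) 0) as [Hneg|Hposb].
    - destruct (approx (beta - a / 2)) as [e [[De de] He]]; [lra|].
      assert (e <= beta) by (apply ub; split; auto).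
      specialize (near e De ltac:(rewrite Rabs_left1; lra)).
      apply Rabs_def2 in near. rewrite Rabs_left1 in near; lra.
    - destruct (D_open beta Db) as [t [Ht Dt]].
      set (e := Rmin t (beta + a / 2)).
      assert (He : beta < e <= t) by (split; [apply Rmin_glb_lt; lra|apply Rmin_l]).
      assert (De : D e) by (apply (D_down e t); auto; lra).
      assert (e <= beta + a / 2) by apply Rmin_r.
      specialize (near e De ltac:(rewrite Rabs_right; lra)).
      apply Rabs_def2 in near. rewrite Rabs_right in near by lra.
      assert (e <= beta) by (apply ub; split; auto; lra). lra. }
  exists beta; split; [|split; [auto|split; [auto|]]].
  { destruct (Rle_lt_or_eq_dec 0 beta Hbeta) as [| <-]; auto; lra. }
  intros s; split.
  - intros Es. split; [apply D_nonneg, Es|].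
    destruct (Rle_lt_or_eq_dec s beta (ub s Es)) as [| ->]; auto.
    destruct Es; lra.
  - intros Hs. destruct (approx s (proj2 Hs)) as [e [Ee He]].
    apply (positivity_set_down s e); auto; lra.
Qed.

End FirstZero.

(** * Rational functions in reduced form *)

Lemma Pcoprime_no_common_root r1 r2 t :
  Pcoprime r1 r2 -> Peval r2 t = 0 -> Peval r1 t <> 0.
Proof.
  intros [u [v Hb]] H2 H1. specialize (Hb t). rewrite H1, H2, !Rmult_0_r in Hb. lra.
Qed.

Section ReducedForm.

Variables (f : R -> R) (r1 r2 : list R) (sigma : R).
Hypotheses (Hred : reduced_form f r1 r2)
  (f_cont : forall s, 0 <= s < sigma -> limit1_in f (fun x => 0 <= x < sigma) (f s) s)
  (f_pos : forall s, 0 < s < sigma -> 0 < f s).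

(* Off the finite exceptional set, [f = r1/r2] with [f > 0] forces [r2 <> 0] (Rocq's [x / 0]
   is [0]), so [r1 - f r2] vanishes on a dense subset of [(0, sigma)]; continuity and
   coprimality do the rest. *)
Lemma reduced_form_eval s :
  0 <= s < sigma -> Peval r2 s <> 0 /\ Peval r1 s / Peval r2 s = f s.
Proof.
  intros Hs. destruct Hred as [_ [Hcop [L HL]]].
  assert (cross : Peval r1 s - f s * Peval r2 s = 0).
  { apply (limit1_in_zero_dense (fun x => Peval r1 x - f x * Peval r2 x) (fun x => 0 <= x < sigma)).
    - apply limit_minus; [|apply limit_mul; [apply f_cont; auto|]];
        apply continuity_pt_limit1_in, Peval_continuity_pt.
    - intros a Ha.
      destruct (exists_not_In_between L s (Rmin (s + a) sigma)) as [x [Hx HxL]].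
      { apply Rmin_glb_lt; lra. }
      assert (x < s + a) by (pose proof (Rmin_l (s + a) sigma); lra).
      assert (x < sigma) by (pose proof (Rmin_r (s + a) sigma); lra).
      exists x; split; [lra|split; [rewrite Rabs_right; lra|]].
      assert (fx := f_pos x ltac:(lra)). rewrite (HL x HxL) in fx |- *.
      assert (Peval r2 x <> 0) by (intros E; rewrite E, Rdiv_0_r in fx; lra).
      field; auto. }
  assert (r2s : Peval r2 s <> 0).
  { intros E. apply (Pcoprime_no_common_root r1 r2 s Hcop E).
    rewrite E, Rmult_0_r, Rminus_0_r in cross. exact cross. }
  split; auto. replace (Peval r1 s) with (f s * Peval r2 s) by lra. field; auto.
Qed.

Lemma reduced_form_pole :
  0 < sigma ->
  (forall M, exists eta, 0 < eta /\ forall s, sigma - eta < s < sigma -> M < f s) ->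
  Peval r2 sigma = 0.
Proof.
  intros Hsigma f_blowup. apply NNPP; intros Hne.
  assert (Hc : limit1_in (fun x => Peval r1 x / Peval r2 x) (fun _ => True)
                 (Peval r1 sigma / Peval r2 sigma) sigma).
  { apply (continuity_pt_limit1_in (fun x => Peval r1 x / Peval r2 x)).
    apply (continuity_pt_div (Peval r1) (Peval r2)); auto;
      apply Peval_continuity_pt. }
  destruct (limit1_in_ball _ _ _ _ Hc 1) as [a [Ha near]]; [lra|].
  destruct (f_blowup (Rabs (Peval r1 sigma / Peval r2 sigma) + 1)) as [eta [Heta big]].
  set (x := Rmax (Rmax (sigma - a / 2) (sigma - eta / 2)) (sigma / 2)).
  assert (Hx1 : sigma - a / 2 <= x) by (eapply Rle_trans; [apply Rmax_l|apply Rmax_l]).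
  assert (Hx2 : sigma - eta / 2 <= x) by (eapply Rle_trans; [apply Rmax_r|apply Rmax_l]).
  assert (Hx3 : sigma / 2 <= x) by apply Rmax_r.
  assert (Hx4 : x < sigma) by (repeat apply Rmax_lub_lt; lra).
  specialize (near x I ltac:(rewrite Rabs_left; lra)).
  specialize (big x ltac:(lra)).
  rewrite (proj2 (reduced_form_eval x ltac:(lra))) in near.
  apply Rabs_def2 in near. pose proof (Rle_abs (Peval r1 sigma / Peval r2 sigma)). lra.
Qed.

End ReducedForm.

(** * The cascade recursion *)

Section Cascade.

Variables (a0 b0 c0 a1 b1 c1 Fbar Sbar : nat -> R) (n : nat).
Hypothesis Hpos : forall i, (1 <= i <= n)%nat ->
  0 < a0 i /\ 0 < b0 i /\ 0 < c0 i /\ 0 < a1 i /\ 0 < b1 i /\ 0 < c1 i /\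
  0 < Fbar i /\ 0 < Sbar i.

Local Notation δ := (delta a1 b1 c1).
Local Notation γ := (gamma c0 a1 b1 c1).
Local Notation λ := (lambda a0 b0 c0 a1 b1 c1).
Local Notation den := (dfun c0 a1 b1 c1 Fbar Sbar).
Local Notation gYc := (gY c0 a1 b1 c1 Fbar).

Lemma params_pos i : (1 <= i <= n)%nat ->
  0 < δ i /\ 0 < γ i /\ 0 < λ i /\ 0 < Fbar i /\ 0 < Sbar i.
Proof.
  intros Hi. destruct (Hpos i Hi) as (Ha0 & Hb0 & Hc0 & Ha1 & Hb1 & Hc1 & HF & HS).
  assert (Hδ : 0 < δ i) by (apply Rdiv_lt_0_compat; lra).
  assert (Hγ : 0 < γ i) by (apply Rmult_lt_0_compat; auto; apply Rdiv_lt_0_compat; lra).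
  repeat split; auto. apply Rmult_lt_0_compat; auto. apply Rdiv_lt_0_compat; lra.
Qed.

Lemma den_at_origin i : den i 0 0 = Sbar i.
Proof. unfold dfun. ring. Qed.

Lemma den_ratio_decr i x1 x2 y1 y2 : (1 <= i <= n)%nat ->
  0 < x1 < x2 -> 0 <= y1 <= y2 -> 0 <= den i x2 y2 ->
  x1 * den i x2 y2 < x2 * den i x1 y1.
Proof.
  intros Hi [Hx1 Hx12] [Hy1 Hy12] Hd. destruct (params_pos i Hi) as (Hδ & Hγ & _ & HF & _).
  unfold dfun in *. set (K := Fbar i * (δ i + γ i)) in *.
  assert (HK : 0 < K) by (unfold K; nra).
  assert (HS : 0 < Sbar i - y2).
  { apply Rnot_le_lt; intros HS.
    assert (0 < δ i * x2) by nra.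
    assert ((Sbar i - y2) * (δ i * x2) <= 0) by nra.
    assert (0 < K * x2 + δ i * x2 ^ 2) by (simpl; nra). nra. }
  assert (E : x2 * (Sbar i - y1 - x1 - K * x1 + δ i * (Sbar i - y1) * x1 - δ i * x1 ^ 2)
            - x1 * (Sbar i - y2 - x2 - K * x2 + δ i * (Sbar i - y2) * x2 - δ i * x2 ^ 2)
            = (Sbar i - y2) * (x2 - x1) + x2 * (y2 - y1)
              + δ i * x1 * x2 * ((y2 - y1) + (x2 - x1))) by ring.
  assert (0 < δ i * x1 * x2) by (apply Rmult_lt_0_compat; nra).
  assert (0 < (Sbar i - y2) * (x2 - x1)) by nra.
  nra.
Qed.

Lemma den_neg_large i x y : (1 <= i <= n)%nat ->
  0 <= y -> Sbar i + 1 < x -> den i x y < 0.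
Proof.
  intros Hi Hy Hx. destruct (params_pos i Hi) as (Hδ & Hγ & _ & HF & HS). unfold dfun.
  assert (0 <= Fbar i * (δ i + γ i) * x) by (apply Rmult_le_pos; nra).
  assert (0 <= δ i * y * x) by (apply Rmult_le_pos; nra).
  assert (δ i * x * (Sbar i - x) < 0) by (assert (0 < δ i * x) by nra; nra).
  nra.
Qed.

Lemma den_limit i (x y : R -> R) D s :
  limit1_in x D (x s) s -> limit1_in y D (y s) s ->
  limit1_in (fun t => den i (x t) (y t)) D (den i (x s) (y s)) s.
Proof.
  intros Hx Hy.
  assert (Hc : forall c, limit1_in (fun _ => c) D c s)
    by (intros c; exact (limit_free (fun _ => c) D 0 s)).
  apply limit1_in_ext with (fun t => (Sbar i - y t) - x t - Fbar i * (δ i + γ i) * x t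
                                    + δ i * (Sbar i - y t) * x t - δ i * (x t * x t)).
  { intros t _. unfold dfun. ring. }
  replace (den i (x s) (y s)) with ((Sbar i - y s) - x s - Fbar i * (δ i + γ i) * x s
                                    + δ i * (Sbar i - y s) * x s - δ i * (x s * x s))
    by (unfold dfun; ring).
  repeat (apply limit_minus || apply limit_plus || apply limit_mul); auto.
Qed.

Lemma gY_le i x1 x2 : (1 <= i <= n)%nat -> 0 <= x1 <= x2 -> gYc i x1 <= gYc i x2.
Proof.
  intros Hi [Hx1 Hx12]. destruct (params_pos i Hi) as (Hδ & Hγ & _ & HF & _).
  destruct (Rle_lt_or_eq_dec x1 x2 Hx12) as [Hlt| ->]; [|lra].
  left. unfold gY. apply Rdiv_scaled_lt; nra.
Qed.

Lemma gY_nonneg i x : (1 <= i <= n)%nat -> 0 <= x -> 0 <= gYc i x.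
Proof.
  intros Hi Hx. destruct (params_pos i Hi) as (Hδ & Hγ & _ & HF & _).
  unfold gY. apply Rmult_le_pos; [apply Rmult_le_pos; [apply Rmult_le_pos|]; lra|].
  left; apply Rinv_0_lt_compat; nra.
Qed.

Lemma gY_limit i (x : R -> R) D s : (1 <= i <= n)%nat ->
  limit1_in x D (x s) s -> 0 <= x s ->
  limit1_in (fun t => gYc i (x t)) D (gYc i (x s)) s.
Proof.
  intros Hi Hx Hxs. destruct (params_pos i Hi) as (Hδ & _).
  apply (limit1_in_scaled_div x (fun t => 1 + δ i * x t)); auto; [|nra].
  apply limit_plus; [apply (limit_free (fun _ => 1) D 0 s)|].
  apply limit_mul; auto. apply (limit_free (fun _ => δ i) D 0 s).
Qed.

Definition casc_x k s := fst (casc a0 b0 c0 a1 b1 c1 Fbar Sbar n s k).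
Definition casc_y k s := snd (casc a0 b0 c0 a1 b1 c1 Fbar Sbar n s k).
Definition next_den k s := den (n - k) (casc_x k s) (casc_y k s).

Lemma casc_S k s : casc a0 b0 c0 a1 b1 c1 Fbar Sbar n s (S k) =
  (λ (n - k) * Fbar (n - k) * casc_x k s / next_den k s, gYc (n - k) (casc_x k s)).
Proof.
  unfold next_den, casc_x, casc_y. simpl.
  destruct (casc a0 b0 c0 a1 b1 c1 Fbar Sbar n s k); reflexivity.
Qed.

Lemma casc_x_S k s : casc_x (S k) s = λ (n - k) * Fbar (n - k) * casc_x k s / next_den k s.
Proof. unfold casc_x at 1. rewrite casc_S. reflexivity. Qed.

Lemma casc_y_S k s : casc_y (S k) s = gYc (n - k) (casc_x k s).
Proof. unfold casc_y at 1. rewrite casc_S. reflexivity. Qed.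

Fixpoint casc_dom k s : Prop :=
  match k with
  | O => 0 <= s
  | S k => casc_dom k s /\ 0 < next_den k s
  end.

Lemma casc_dom_nonneg k s : casc_dom k s -> 0 <= s.
Proof. induction k; simpl; tauto. Qed.

Lemma casc_dom_le k j s : (j <= k)%nat -> casc_dom k s -> casc_dom j s.
Proof. induction 1; simpl; tauto. Qed.

Record casc_inv (k : nat) : Prop := {
  inv_dom0 : casc_dom k 0;
  inv_down : forall s t, casc_dom k t -> 0 <= s <= t -> casc_dom k s;
  inv_open : forall s, casc_dom k s -> exists t, s < t /\ casc_dom k t;
  inv_x0 : casc_x k 0 = 0;
  inv_y0 : casc_y k 0 = 0;
  inv_x_incr : forall s t, casc_dom k s -> casc_dom k t -> s < t -> casc_x k s < casc_x k t;
  inv_y_incr : forall s t, casc_dom k s -> casc_dom k t -> s <= t -> casc_y k s <= casc_y k t;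
  inv_y_nonneg : forall s, casc_dom k s -> 0 <= casc_y k s;
  inv_x_cont : forall s, casc_dom k s -> limit1_in (casc_x k) (casc_dom k) (casc_x k s) s;
  inv_y_cont : forall s, casc_dom k s -> limit1_in (casc_y k) (casc_dom k) (casc_y k s) s;
  inv_x_unbounded : forall M, exists s, casc_dom k s /\ M < casc_x k s }.
Arguments inv_dom0 {k}.
Arguments inv_down {k}.
Arguments inv_open {k}.
Arguments inv_x0 {k}.
Arguments inv_y0 {k}.
Arguments inv_x_incr {k}.
Arguments inv_y_incr {k}.
Arguments inv_y_nonneg {k}.
Arguments inv_x_cont {k}.
Arguments inv_y_cont {k}.
Arguments inv_x_unbounded {k}.

Lemma casc_inv_0 : casc_inv 0.
Proof.
  split; unfold casc_x, casc_y; simpl.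
  - lra.
  - intros s t _ Hst; lra.
  - intros s Hs. exists (s + 1); lra.
  - reflexivity.
  - reflexivity.
  - intros s t _ _ Hst; exact Hst.
  - intros; lra.
  - intros; lra.
  - intros s _. apply lim_x.
  - intros s _. apply (limit_free (fun _ => 0) _ 0 s).
  - intros M. exists (Rabs M + 1). pose proof (Rle_abs M). pose proof (Rabs_pos M). lra.
Qed.

Lemma casc_inv_x_pos k s : casc_inv k -> casc_dom k s -> 0 < s -> 0 < casc_x k s.
Proof.
  intros Hinv Ds Hs. rewrite <- (inv_x0 Hinv). apply (inv_x_incr Hinv); auto.
  apply (inv_dom0 Hinv).
Qed.

Lemma casc_inv_x_nonneg k s : casc_inv k -> casc_dom k s -> 0 <= casc_x k s.
Proof.
  intros Hinv Ds. destruct (Rle_lt_or_eq_dec 0 s (casc_dom_nonneg k s Ds)) as [Hs| <-].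
  - left; apply casc_inv_x_pos; auto.
  - rewrite (inv_x0 Hinv); lra.
Qed.

Section Step.

Variable k : nat.
Hypotheses (Hk : (k < n)%nat) (Hinv : casc_inv k).

Lemma next_den_0 : next_den k 0 = Sbar (n - k).
Proof. unfold next_den. rewrite (inv_x0 Hinv), (inv_y0 Hinv). apply den_at_origin. Qed.

Lemma next_den_cont s :
  casc_dom k s -> limit1_in (next_den k) (casc_dom k) (next_den k s) s.
Proof.
  intros Ds. apply den_limit; [apply (inv_x_cont Hinv)|apply (inv_y_cont Hinv)]; auto.
Qed.

Lemma next_den_ratio s t : casc_dom k t -> 0 <= s < t -> 0 <= next_den k t ->
  casc_x k s * next_den k t < casc_x k t * next_den k s.
Proof.
  intros Dt [Hs Hst] Hdt.
  assert (Ds : casc_dom k s) by (apply (inv_down Hinv) with t; auto; lra).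
  destruct (Rle_lt_or_eq_dec 0 s Hs) as [Hs0| <-].
  - apply den_ratio_decr; [lia|split|split|auto].
    + apply casc_inv_x_pos; auto.
    + apply (inv_x_incr Hinv); auto.
    + apply (inv_y_nonneg Hinv); auto.
    + apply (inv_y_incr Hinv); auto; lra.
  - rewrite (inv_x0 Hinv), Rmult_0_l, next_den_0.
    apply Rmult_lt_0_compat; [apply casc_inv_x_pos; auto|apply params_pos; lia].
Qed.

Lemma next_den_pos_down s t : casc_dom k t -> 0 <= s < t -> 0 <= next_den k t ->
  0 < next_den k s.
Proof.
  intros Dt Hst Hdt. pose proof (next_den_ratio s t Dt Hst Hdt).
  assert (0 <= casc_x k s).
  { apply casc_inv_x_nonneg; auto. apply (inv_down Hinv) with t; auto; lra. }
  assert (0 < casc_x k t) by (apply casc_inv_x_pos; auto; lra).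
  nra.
Qed.

Lemma next_den_eventually_neg : exists t, casc_dom k t /\ next_den k t < 0.
Proof.
  destruct (inv_x_unbounded Hinv (Sbar (n - k) + 1)) as [t [Dt Ht]].
  exists t; split; auto. apply den_neg_large; [lia|apply (inv_y_nonneg Hinv)|]; auto.
Qed.

Lemma next_dom_interval : exists beta, 0 < beta /\ casc_dom k beta /\
  next_den k beta = 0 /\ forall s, casc_dom (S k) s <-> 0 <= s < beta.
Proof.
  apply (first_zero (casc_dom k) (next_den k)).
  - apply casc_dom_nonneg.
  - apply (inv_down Hinv).
  - apply (inv_open Hinv).
  - apply (inv_dom0 Hinv).
  - rewrite next_den_0. apply params_pos; lia.
  - apply next_den_cont.
  - apply next_den_pos_down.
  - apply next_den_eventually_neg.
Qed.

(* [f_{i-1} = λ_i Fbar_i f_i / d_i] with [f_i] bounded below near [beta] and [d_i -> 0]. *)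
Lemma next_x_unbounded M : exists s, casc_dom (S k) s /\ M < casc_x (S k) s.
Proof.
  destruct next_dom_interval as [beta [Hb [Db [Hd0 Hdom]]]].
  destruct (params_pos (n - k) ltac:(lia)) as (_ & _ & Hλ & HF & _).
  set (c := λ (n - k) * Fbar (n - k)).
  assert (Hc : 0 < c) by (unfold c; nra).
  set (xh := casc_x k (beta / 2)).
  assert (Hxh : 0 < xh) by (apply casc_inv_x_pos; [auto|apply Hdom; lra|lra]).
  destruct (inv_unbounded_near_zero (casc_dom k) (next_den k) (beta / 2) beta
              ltac:(lra) Db (next_den_cont beta Db) Hd0 ltac:(intros s Hs; apply Hdom; lra)
              (M / (c * xh))) as [s [Hs Hbig]].
  exists s; split; [apply Hdom; lra|].
  destruct (proj2 (Hdom s) ltac:(lra)) as [Ds Hds].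
  assert (Hmono : xh <= casc_x k s).
  { destruct (Rle_lt_or_eq_dec _ _ (proj1 Hs)) as [Hlt| <-]; [|unfold xh; lra].
    left; apply (inv_x_incr Hinv); auto. apply Hdom; lra. }
  apply Rmult_lt_compat_l with (r := c * xh) in Hbig; [|nra].
  replace (c * xh * (M / (c * xh))) with M in Hbig by (field; lra).
  rewrite casc_x_S. fold c.
  assert (c * xh * / next_den k s <= c * casc_x k s / next_den k s); [|lra].
  apply Rmult_le_compat_r; [left; apply Rinv_0_lt_compat; auto|nra].
Qed.

Lemma casc_inv_S : casc_inv (S k).
Proof.
  destruct next_dom_interval as [beta [Hb [_ [_ Hdom]]]].
  destruct (params_pos (n - k) ltac:(lia)) as (Hδ & Hγ & Hλ & HF & _).
  assert (DS : forall s, casc_dom (S k) s -> casc_dom k s /\ 0 < next_den k s)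
    by (intros s Hs; exact Hs).
  split.
  - apply Hdom; lra.
  - intros s t Dt Hst. apply Hdom. apply Hdom in Dt. lra.
  - intros s Ds. apply Hdom in Ds. exists ((s + beta) / 2). split; [lra|apply Hdom; lra].
  - rewrite casc_x_S, (inv_x0 Hinv). unfold Rdiv; ring.
  - rewrite casc_y_S, (inv_x0 Hinv). unfold gY, Rdiv; ring.
  - intros s t Ds Dt Hst. rewrite !casc_x_S.
    destruct (DS s Ds) as [_ Hds]. destruct (DS t Dt) as [Dt' Hdt].
    apply Rdiv_scaled_lt; try nra.
    apply next_den_ratio; [exact Dt'|split; [exact (casc_dom_nonneg _ _ Ds)|exact Hst]|lra].
  - intros s t Ds Dt Hst. rewrite !casc_y_S. apply gY_le; [lia|split].
    + apply casc_inv_x_nonneg; auto. apply DS; auto.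
    + destruct (Rle_lt_or_eq_dec s t Hst) as [Hlt| <-]; [|lra].
      left; apply (inv_x_incr Hinv); auto; [apply DS|apply DS]; auto.
  - intros s Ds. rewrite casc_y_S. apply gY_nonneg; [lia|].
    apply casc_inv_x_nonneg; auto. apply DS; auto.
  - intros s Ds. destruct (DS s Ds) as [Ds' Hds].
    apply limit1_in_ext with (fun t => λ (n - k) * Fbar (n - k) * casc_x k t / next_den k t).
    { intros t _. rewrite casc_x_S. reflexivity. }
    rewrite casc_x_S. apply limit1_in_restrict with (casc_dom k); [intros t Dt; apply DS, Dt|].
    apply limit1_in_scaled_div; [apply (inv_x_cont Hinv)|apply next_den_cont|lra]; auto.
  - intros s Ds. destruct (DS s Ds) as [Ds' _].
    apply limit1_in_ext with (fun t => gYc (n - k) (casc_x k t)).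
    { intros t _. rewrite casc_y_S. reflexivity. }
    rewrite casc_y_S. apply limit1_in_restrict with (casc_dom k); [intros t Dt; apply DS, Dt|].
    apply gY_limit; [lia|apply (inv_x_cont Hinv)|apply casc_inv_x_nonneg]; auto.
  - apply next_x_unbounded.
Qed.

End Step.

Lemma casc_inv_all k : (k <= n)%nat -> casc_inv k.
Proof.
  induction k as [|k IH]; intros Hk; [apply casc_inv_0|].
  apply casc_inv_S; [lia|apply IH; lia].
Qed.

Lemma casc_dom_interval : (1 <= n)%nat ->
  exists sigma, 0 < sigma /\ forall s, casc_dom n s <-> 0 <= s < sigma.
Proof.
  intros Hn. destruct (next_dom_interval (n - 1)) as [sigma [Hs [_ [_ Hdom]]]];
    [lia|apply casc_inv_all; lia|].
  replace (S (n - 1)) with n in Hdom by lia. eauto.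
Qed.

Local Notation r := (rfun a0 b0 c0 a1 b1 c1 Fbar Sbar n).
Local Notation bmss := (BMSS a0 b0 c0 a1 b1 c1 Fbar Sbar n).

Lemma rfun_casc s : r s = casc_x n s + casc_y n s.
Proof. reflexivity. Qed.

Lemma rfun_0 : r 0 = 0.
Proof.
  pose proof (casc_inv_all n (le_n n)) as Hinv.
  rewrite rfun_casc, (inv_x0 Hinv), (inv_y0 Hinv). ring.
Qed.

Lemma rfun_incr s t : casc_dom n s -> casc_dom n t -> s < t -> r s < r t.
Proof.
  intros Ds Dt Hst. pose proof (casc_inv_all n (le_n n)) as Hinv. rewrite !rfun_casc.
  pose proof (inv_x_incr Hinv s t Ds Dt Hst).
  pose proof (inv_y_incr Hinv s t Ds Dt (Rlt_le _ _ Hst)). lra.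
Qed.

Lemma rfun_cont s : casc_dom n s -> limit1_in r (casc_dom n) (r s) s.
Proof.
  intros Ds. pose proof (casc_inv_all n (le_n n)) as Hinv.
  apply limit_plus; [apply (inv_x_cont Hinv)|apply (inv_y_cont Hinv)]; auto.
Qed.

Lemma rfun_unbounded M : exists s, casc_dom n s /\ M < r s.
Proof.
  pose proof (casc_inv_all n (le_n n)) as Hinv.
  destruct (inv_x_unbounded Hinv M) as [s [Ds Hs]]. exists s; split; auto.
  rewrite rfun_casc. pose proof (inv_y_nonneg Hinv s Ds). lra.
Qed.

(** * Steady states *)

(* A steady state is determined by its profile [p i = S_i^1]: conservation of [F_i] and the
   complex equations give [F_i], [Y_i^0], [Y_i^1], and conservation of [S_i] gives [S_i^0];
   [Y0_next p i] is [Y_{i+1}^0], with [Y_{n+1}^0 = 0]. *)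
Definition F_of (p : nat -> R) i := Fbar i / (1 + δ i * p i).
Definition Y0_of (p : nat -> R) i := γ i * F_of p i * p i.
Definition Y1_of (p : nat -> R) i := δ i * F_of p i * p i.
Definition Y0_next (p : nat -> R) i := if Nat.eqb i n then 0 else Y0_of p (S i).
Definition S0_of (p : nat -> R) i := Sbar i - p i - Y0_of p i - Y1_of p i - Y0_next p i.

Record steady_profile (p : nat -> R) : Prop := {
  profile_nonneg : forall i, (i <= n)%nat -> 0 <= p i;
  profile_den_nonneg : forall i, (1 <= i <= n)%nat -> 0 <= den i (p i) (Y0_next p i);
  profile_step : forall i, (1 <= i <= n)%nat ->
    p (i - 1)%nat * den i (p i) (Y0_next p i) = λ i * Fbar i * p i }.
Arguments profile_nonneg {p}.
Arguments profile_den_nonneg {p}.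
Arguments profile_step {p}.

Lemma Y0_of_gY p i : Y0_of p i = gYc i (p i).
Proof. unfold Y0_of, F_of, gY, Rdiv. ring. Qed.

Lemma Y0_next_0 p : (1 <= n)%nat -> Y0_next p 0 = Y0_of p 1.
Proof. intros Hn. unfold Y0_next. destruct (Nat.eqb_spec 0 n); [lia|reflexivity]. Qed.

Lemma S0_of_den p i : (1 <= i <= n)%nat -> 0 <= p i ->
  S0_of p i * (1 + δ i * p i) = den i (p i) (Y0_next p i).
Proof.
  intros Hi Hp. destruct (params_pos i Hi) as (Hδ & _).
  unfold S0_of, Y0_of, Y1_of, F_of, dfun. field. nra.
Qed.

Lemma steady_profile_bmss p : steady_profile p ->
  bmss (p 0%nat + Y0_of p 1) (S0_of p) p (F_of p) (Y0_of p) (Y1_of p).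
Proof.
  intros Hp.
  assert (Hlayer : forall i, (1 <= i <= n)%nat ->
            0 <= p i /\ 0 < 1 + δ i * p i /\ 0 < F_of p i /\ 0 <= S0_of p i).
  { intros i Hi. destruct (params_pos i Hi) as (Hδ & _ & _ & HF & _).
    pose proof (profile_nonneg Hp i ltac:(lia)) as Hpi.
    pose proof (S0_of_den p i Hi Hpi). pose proof (profile_den_nonneg Hp i Hi).
    assert (Hq : 0 < 1 + δ i * p i) by nra.
    repeat split; auto; [apply Rdiv_lt_0_compat; auto|nra]. }
  split; [apply (profile_nonneg Hp); lia|split; [|split; [|reflexivity]]].
  - intros i Hi. destruct (Hlayer i Hi) as (Hpi & _ & HFi & HS0).
    destruct (params_pos i Hi) as (Hδ & Hγ & _).
    unfold Y0_of, Y1_of. repeat split; auto; try lra;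
      apply Rmult_le_pos; auto; apply Rmult_le_pos; lra.
  - intros i Hi. destruct (Hlayer i Hi) as (Hpi & Hq & _ & _).
    split; [reflexivity|split; [reflexivity|split; [|split]]].
    + apply Rmult_eq_reg_r with (1 + δ i * p i); [|lra].
      replace (S0_of p i * p (i - 1)%nat * (1 + δ i * p i))
        with (p (i - 1)%nat * (S0_of p i * (1 + δ i * p i))) by ring.
      rewrite S0_of_den, profile_step by auto. unfold F_of. field. lra.
    + unfold Y1_of, F_of. field. lra.
    + unfold S0_of, Y0_next. ring.
Qed.

Lemma bmss_species Ebar S0 S1 F Y0 Y1 : bmss Ebar S0 S1 F Y0 Y1 ->
  forall i, (1 <= i <= n)%nat -> F i = F_of S1 i /\ Y0 i = Y0_of S1 i /\ Y1 i = Y1_of S1 i.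
Proof.
  intros (_ & Hnn & Heq & _) i Hi.
  destruct (Heq i Hi) as (HY0 & HY1 & _ & HF & _). destruct (Hnn i Hi) as (_ & HS1 & _).
  destruct (params_pos i Hi) as (Hδ & _).
  assert (HFi : F i = F_of S1 i).
  { unfold F_of. rewrite HF, HY1. field. nra. }
  unfold Y0_of, Y1_of. rewrite <- HFi. auto.
Qed.

Lemma bmss_steady_profile Ebar S0 S1 F Y0 Y1 : (1 <= n)%nat ->
  bmss Ebar S0 S1 F Y0 Y1 -> steady_profile S1 /\ Ebar = S1 0%nat + Y0_of S1 1.
Proof.
  intros Hn HB. pose proof (bmss_species _ _ _ _ _ _ HB) as Hsp.
  destruct HB as (HS10 & Hnn & Heq & HE).
  assert (HS0 : forall i, (1 <= i <= n)%nat -> S0 i = S0_of S1 i).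
  { intros i Hi. destruct (Heq i Hi) as (_ & _ & _ & _ & HS).
    destruct (Hsp i Hi) as (_ & HY0 & HY1).
    unfold S0_of, Y0_next. rewrite HS, HY0, HY1.
    destruct (Nat.eqb_spec i n); [ring|]. rewrite (proj1 (proj2 (Hsp (S i) ltac:(lia)))). ring. }
  assert (Hden : forall i, (1 <= i <= n)%nat ->
            S0 i * (1 + δ i * S1 i) = den i (S1 i) (Y0_next S1 i)).
  { intros i Hi. rewrite HS0 by auto. apply S0_of_den; auto. apply Hnn; auto. }
  split; [split|].
  - intros [|i] Hi; auto. apply Hnn. lia.
  - intros i Hi. rewrite <- Hden by auto. destruct (Hnn i Hi) as (HS0i & HS1i & _).
    destruct (params_pos i Hi) as (Hδ & _). apply Rmult_le_pos; nra.
  - intros i Hi. rewrite <- Hden by auto. destruct (Heq i Hi) as (_ & _ & Hλ & _).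
    destruct (Hsp i Hi) as (HF & _). destruct (Hnn i Hi) as (_ & HS1i & _).
    destruct (params_pos i Hi) as (Hδ & _).
    replace (S1 (i - 1)%nat * (S0 i * (1 + δ i * S1 i)))
      with (S0 i * S1 (i - 1)%nat * (1 + δ i * S1 i)) by ring.
    rewrite <- Hλ, HF. unfold F_of. field. nra.
  - rewrite HE, (proj1 (proj2 (Hsp 1%nat ltac:(lia)))). reflexivity.
Qed.

Definition casc_profile s i := casc_x (n - i) s.

Lemma casc_profile_Y0_next s i : (i <= n)%nat -> casc_y (n - i) s = Y0_next (casc_profile s) i.
Proof.
  intros Hi. unfold Y0_next. destruct (Nat.eqb_spec i n) as [-> | Hne].
  - rewrite Nat.sub_diag. reflexivity.
  - replace (n - i)%nat with (S (n - S i)) by lia. rewrite casc_y_S, Y0_of_gY.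
    unfold casc_profile. f_equal. lia.
Qed.

Lemma casc_steady_profile s : casc_dom n s -> steady_profile (casc_profile s).
Proof.
  intros Ds.
  assert (Dk : forall k, (k <= n)%nat -> casc_dom k s)
    by (intros k Hk; apply casc_dom_le with n; auto).
  assert (Hden : forall i, (1 <= i <= n)%nat ->
            next_den (n - i) s = den i (casc_profile s i) (Y0_next (casc_profile s) i)).
  { intros i Hi. unfold next_den. rewrite casc_profile_Y0_next by lia.
    replace (n - (n - i))%nat with i by lia. reflexivity. }
  assert (Hpos_den : forall i, (1 <= i <= n)%nat -> 0 < next_den (n - i) s)
    by (intros i Hi; apply (Dk (S (n - i))); lia).
  split.
  - intros i Hi. apply casc_inv_x_nonneg; [apply casc_inv_all|apply Dk]; lia.
  - intros i Hi. rewrite <- Hden by auto. left; auto.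
  - intros i Hi. rewrite <- Hden by auto. pose proof (Hpos_den i Hi).
    unfold casc_profile. replace (n - (i - 1))%nat with (S (n - i)) by lia.
    rewrite casc_x_S. replace (n - (n - i))%nat with i by lia. field. lra.
Qed.

Lemma rfun_casc_profile s : (1 <= n)%nat ->
  r s = casc_profile s 0 + Y0_of (casc_profile s) 1.
Proof.
  intros Hn. rewrite rfun_casc, <- Y0_next_0, <- casc_profile_Y0_next by lia.
  unfold casc_profile. rewrite Nat.sub_0_r. reflexivity.
Qed.

(* Vanishing propagates down the layers because [d_i(0, 0) = Sbar_i > 0]. *)
Lemma steady_profile_zero p : (1 <= n)%nat -> steady_profile p -> p n = 0 ->
  p 0%nat + Y0_of p 1 = 0.
Proof.
  intros Hn Hp Hz.
  assert (Hdown : forall m, (m <= n)%nat -> p (n - m)%nat = 0 /\ Y0_next p (n - m) = 0).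
  { induction m as [|m IH]; intros Hm.
    - rewrite Nat.sub_0_r. unfold Y0_next. rewrite Nat.eqb_refl. auto.
    - destruct (IH ltac:(lia)) as [Hp0 Hy0].
      assert (Hi : (1 <= n - m <= n)%nat) by lia.
      destruct (params_pos _ Hi) as (_ & _ & _ & _ & HS).
      pose proof (profile_step Hp _ Hi) as Hstep.
      rewrite Hp0, Hy0, den_at_origin, Rmult_0_r in Hstep.
      replace (n - S m)%nat with (n - m - 1)%nat by lia.
      assert (Hprev : p (n - m - 1)%nat = 0).
      { apply Rmult_integral in Hstep. destruct Hstep; lra. }
      split; auto. unfold Y0_next. destruct (Nat.eqb_spec (n - m - 1) n); [lia|].
      replace (S (n - m - 1)) with (n - m)%nat by lia. unfold Y0_of. rewrite Hp0. ring. }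
  destruct (Hdown n (le_n n)) as [H0 Hy]. rewrite Nat.sub_diag in H0, Hy.
  rewrite Y0_next_0 in Hy by auto. lra.
Qed.

Lemma steady_profile_casc p : steady_profile p -> 0 < p n ->
  forall k, (k <= n)%nat ->
  casc_x k (p n) = p (n - k)%nat /\ casc_y k (p n) = Y0_next p (n - k) /\ casc_dom k (p n).
Proof.
  intros Hp Hpn. induction k as [|k IH]; intros Hk.
  - rewrite Nat.sub_0_r. unfold Y0_next. rewrite Nat.eqb_refl.
    split; [reflexivity|split; [reflexivity|simpl; lra]].
  - destruct (IH ltac:(lia)) as (Hx & Hy & Hd).
    assert (Hi : (1 <= n - k <= n)%nat) by lia.
    destruct (params_pos _ Hi) as (_ & _ & Hλ & HF & _).
    assert (Hxpos : 0 < p (n - k)%nat)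
      by (rewrite <- Hx; apply (casc_inv_x_pos k); auto; apply casc_inv_all; lia).
    pose proof (profile_step Hp _ Hi) as Hstep.
    assert (Hden : 0 < next_den k (p n)).
    { unfold next_den. rewrite Hx, Hy.
      destruct (profile_den_nonneg Hp _ Hi) as [| Hz]; auto.
      rewrite <- Hz, Rmult_0_r in Hstep.
      assert (0 < λ (n - k) * Fbar (n - k) * p (n - k)%nat)
        by (apply Rmult_lt_0_compat; [apply Rmult_lt_0_compat|]; auto). lra. }
    replace (n - S k)%nat with (n - k - 1)%nat by lia.
    split; [|split; [|split; auto]].
    + rewrite casc_x_S. unfold next_den in *. rewrite Hx, Hy in *.
      rewrite <- Hstep. field. lra.
    + rewrite casc_y_S, Hx, <- Y0_of_gY. unfold Y0_next.
      destruct (Nat.eqb_spec (n - k - 1) n); [lia|]. f_equal. lia.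
Qed.

Lemma bmss_iff (Hn : (1 <= n)%nat) Ebar s : 0 < Ebar ->
  (casc_dom n s /\ r s = Ebar) <->
  exists S0 S1 F Y0 Y1, bmss Ebar S0 S1 F Y0 Y1 /\ S1 n = s.
Proof.
  intros HE. split.
  - intros [Ds Hr]. set (p := casc_profile s).
    exists (S0_of p), p, (F_of p), (Y0_of p), (Y1_of p). split.
    + rewrite <- Hr, rfun_casc_profile by auto. apply steady_profile_bmss, casc_steady_profile, Ds.
    + unfold p, casc_profile. rewrite Nat.sub_diag. reflexivity.
  - intros (S0 & S1 & F & Y0 & Y1 & HB & <-).
    destruct (bmss_steady_profile _ _ _ _ _ _ Hn HB) as [Hp HEbar].
    assert (Hpn : 0 < S1 n).
    { destruct (profile_nonneg Hp n (le_n n)) as [| Hz]; auto.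
      pose proof (steady_profile_zero S1 Hn Hp (eq_sym Hz)). lra. }
    destruct (steady_profile_casc S1 Hp Hpn n (le_n n)) as (Hx & Hy & Hd).
    split; auto. rewrite rfun_casc, Hx, Hy, Nat.sub_diag, Y0_next_0 by auto. auto.
Qed.

End Cascade.

Theorem mainTheorem9
  (n : nat) (a0 b0 c0 a1 b1 c1 Fbar Sbar : nat -> R)
  (Hn : (1 <= n)%nat)
  (Hpos : forall i, (1 <= i <= n)%nat ->
     0 < a0 i /\ 0 < b0 i /\ 0 < c0 i /\ 0 < a1 i /\ 0 < b1 i /\ 0 < c1 i /\
     0 < Fbar i /\ 0 < Sbar i)
  (r1 r2 : list R)
  (Hred : reduced_form (rfun a0 b0 c0 a1 b1 c1 Fbar Sbar n) r1 r2) :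
  exists sigma : R,
    (0 < sigma /\ Peval r2 sigma = 0 /\
     forall t, 0 < t < sigma -> Peval r2 t <> 0) /\
    (forall s, 0 <= s < sigma ->
       continuity_pt (fun x => Peval r1 x / Peval r2 x) s) /\
    (forall x y, 0 <= x -> x < y -> y < sigma ->
       Peval r1 x / Peval r2 x < Peval r1 y / Peval r2 y) /\
    Peval r1 0 / Peval r2 0 = 0 /\
    (forall M : R, exists eta : R, 0 < eta /\
       forall s, sigma - eta < s < sigma -> M < Peval r1 s / Peval r2 s) /\
    (forall Ebar : R, 0 < Ebar -> forall s : R,
       (0 <= s < sigma /\ Peval r1 s / Peval r2 s = Ebar) <->
       exists S0 S1 F Y0 Y1 : nat -> R,
         BMSS a0 b0 c0 a1 b1 c1 Fbar Sbar n Ebar S0 S1 F Y0 Y1 /\ S1 n = s).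
Proof.
  destruct (casc_dom_interval a0 b0 c0 a1 b1 c1 Fbar Sbar n Hpos Hn) as [sigma [Hsigma Hdom]].
  set (f := rfun a0 b0 c0 a1 b1 c1 Fbar Sbar n) in *.
  assert (f_incr : forall x y, 0 <= x -> x < y -> y < sigma -> f x < f y)
    by (intros x y Hx Hxy Hy; apply rfun_incr; auto; apply Hdom; lra).
  assert (f_cont : forall s, 0 <= s < sigma -> limit1_in f (fun x => 0 <= x < sigma) (f s) s).
  { intros s Hs. apply limit1_in_restrict with (casc_dom a0 b0 c0 a1 b1 c1 Fbar Sbar n n);
      [intros x; apply Hdom|apply rfun_cont; auto; apply Hdom, Hs]. }
  assert (f_pos : forall s, 0 < s < sigma -> 0 < f s)
    by (intros s Hs; rewrite <- (rfun_0 a0 b0 c0 a1 b1 c1 Fbar Sbar n Hpos); apply f_incr; lra).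
  assert (f_unbounded : forall M, exists s, 0 <= s < sigma /\ M < f s).
  { intros M. destruct (rfun_unbounded a0 b0 c0 a1 b1 c1 Fbar Sbar n Hpos M) as [s [Ds HM]].
    exists s; split; auto. apply Hdom, Ds. }
  pose proof (incr_unbounded_blowup f sigma f_incr f_unbounded) as f_blowup.
  pose proof (reduced_form_eval f r1 r2 sigma Hred f_cont f_pos) as Heval.
  assert (Hr : forall s, 0 <= s < sigma -> Peval r1 s / Peval r2 s = f s) by apply Heval.
  exists sigma. split; [|split; [|split; [|split; [|split]]]].
  - split; [auto|split; [apply (reduced_form_pole f r1 r2 sigma Hred f_cont f_pos); auto|]].
    intros t Ht. apply Heval; lra.
  - intros s Hs. apply (continuity_pt_div (Peval r1) (Peval r2));
      [apply Peval_continuity_pt|apply Peval_continuity_pt|apply Heval, Hs].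
  - intros x y Hx Hxy Hy. rewrite !Hr by lra. auto.
  - rewrite Hr by lra. apply rfun_0, Hpos.
  - intros M. destruct (f_blowup M) as [eta [Heta Hbig]].
    exists (Rmin eta sigma). split; [apply Rmin_glb_lt; auto|].
    intros s Hs. pose proof (Rmin_l eta sigma). pose proof (Rmin_r eta sigma).
    rewrite Hr by lra. apply Hbig. lra.
  - intros Ebar HE s. rewrite <- (bmss_iff a0 b0 c0 a1 b1 c1 Fbar Sbar n Hpos Hn Ebar s HE), Hdom.
    split; intros [Hs HEbar]; split; auto; [rewrite <- Hr|rewrite Hr]; auto.
Qed.
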